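(* Let $A$ be a basic connected finite dimensional algebra over an algebraically closed field $k$ with ordinary quiver $Q$ without oriented cycles. Let $f\in\mathsf{HH}^1(A)$ be diagonal with respect to a basis $\mathcal B$ of $A$, and let $\nu\colon kQ\twoheadrightarrow A$ be a presentation adapted to $\mathcal B$, i.e. $\nu(\alpha)\in\mathcal B$ for every arrow $\alpha$ of $Q$. Then $f\in\mathsf{Im}(\theta_\nu)$.
   Context: Fix a complete set $e_1,\dots,e_n$ of primitive orthogonal idempotents of $A$ indexed by $Q_0=\{1,\dots,n\}$, $E=\bigoplus ke_i$, $\mathfrak r$ the radical. A presentation is a surjective algebra map $\nu\colon kQ\twoheadrightarrow A$ with admissible kernel ($(kQ^+)^N\subseteq\mathsf{Ker}\,\nu\subseteq(kQ^+)^2$ for some $N\ge2$, $kQ^+$ the arrow ideal) and $\nu(e_i)=e_i$. $\mathsf{HH}^1(A)=Der_0(A)/Int_0(A)$, with $Der_0(A)$ the derivations vanishing on all $e_i$ (commutator bracket) and $Int_0(A)=\{a\mapsto ea-ae\mid e\in E\}$. A basis of $A$ is a $k$-basis $\mathcal B\subseteq\bigcup_{i,j}e_jAe_i$ containing $e_1,\dots,e_n$ with its other elements in $\mathfrak r$; $f\in\mathsf{HH}^1(A)$ is diagonal with respect to $\mathcal B$ if a derivation representing $f$ is diagonal in $\mathcal B$. Walks: paths in $Q$ with formal inverse arrows allowed. For $I=\mathsf{Ker}\,\nu$, the homotopy relation $\sim_I$ is the smallest equivalence relation on walks with $\alpha\alpha^{-1}\sim_I e_y$, $\alpha^{-1}\alpha\sim_I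 e_x$ for arrows $\alpha\colon x\to y$, compatible with concatenation, and identifying two paths occurring with nonzero coefficient in a same minimal relation of $I$ (a nonzero $\sum t_iu_i\in I$, $t_i\neq0$, distinct paths, no nonempty proper subsum in $I$). $\pi_1(Q,I)$ is the group of classes of closed walks at a fixed vertex $x_0$. Fix a maximal tree $T$ of $Q$, $\gamma_x$ the minimal walk in $T$ from $x_0$ to $x$. For a group homomorphism $g\colon\pi_1(Q,I)\to k^+$, $\theta_\nu(g)$ is the class of the derivation $\tilde g$ with $\tilde g(\nu(u))=g([\gamma_y^{-1}u\gamma_x]_I)\nu(u)$ for paths $u$ from $x$ to $y$. *)

From HB Require Import structures.
From mathcomp Require Import all_boot all_order all_algebra falgebra.
Set Implicit Arguments.
Unset Strict Implicit.
Unset Printing Implicit Defensive.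
Import GRing.Theory.
Local Open Scope ring_scope.

Section Quiver.
Variables (n : nat) (Q1 : finType) (src tgt : Q1 -> 'I_n).

(* A letter of a walk: (alpha, true) is the arrow alpha, (alpha, false) its *)
(* formal inverse alpha^{-1}. *)
Definition letter := (Q1 * bool)%type.
Definition lsrc (l : letter) : 'I_n := if l.2 then src l.1 else tgt l.1.
Definition ltgt (l : letter) : 'I_n := if l.2 then tgt l.1 else src l.1.
Definition linv (l : letter) : letter := (l.1, ~~ l.2).

(* A walk is a starting vertex together with the list of its letters, in the *)
(* order in which they are traversed. *)
Definition walk := ('I_n * seq letter)%type.

Fixpoint valid_from (x : 'I_n) (ls : seq letter) : bool :=
  if ls is l :: ls' then (lsrc l == x) && valid_from (ltgt l) ls' else true.

Definition wvalid (w : walk) : bool := valid_from w.1 w.2.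
Definition wend (w : walk) : 'I_n := last w.1 [seq ltgt l | l <- w.2].

(* Concatenation in the paper's (right-to-left) notation: wcat w2 w1 = w2 w1 *)
(* is "first w1, then w2". *)
Definition wcat (w2 w1 : walk) : walk := (w1.1, w1.2 ++ w2.2).
Definition winv (w : walk) : walk := (wend w, rev [seq linv l | l <- w.2]).
Definition etriv (x : 'I_n) : walk := (x, [::]).

(* Paths: a starting vertex and the list of arrows in traversal order. *)
Definition qpath := ('I_n * seq Q1)%type.
Definition path_walk (u : qpath) : walk := (u.1, [seq (al, true) | al <- u.2]).
Definition pvalid (u : qpath) : bool := wvalid (path_walk u).
Definition pend (u : qpath) : 'I_n := wend (path_walk u).

Definition no_oriented_cycles : Prop :=
  forall u : qpath, pvalid u -> u.2 != [::] -> pend u != u.1.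

Definition Twalk (T : {set Q1}) (w : walk) : bool := all (fun l => l.1 \in T) w.2.
Definition reduced (w : walk) : bool := sorted (fun l1 l2 => l2 != linv l1) w.2.

Definition maximal_tree (T : {set Q1}) : Prop :=
  (forall x y : 'I_n, exists w : walk,
      [/\ wvalid w, w.1 = x, wend w = y & Twalk T w]) /\
  (forall w : walk, wvalid w -> Twalk T w -> reduced w -> wend w = w.1 -> w.2 = [::]).

Definition gamma_spec (T : {set Q1}) (x0 : 'I_n) (gamma : 'I_n -> walk) : Prop :=
  forall x : 'I_n, [/\ wvalid (gamma x), (gamma x).1 = x0, wend (gamma x) = x,
                      Twalk T (gamma x) & reduced (gamma x)].

Definition closed_at (x0 : 'I_n) (w : walk) : bool :=
  [&& wvalid w, w.1 == x0 & wend w == x0].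

End Quiver.

Section Algebra.
Variables (k : fieldType) (A : falgType k).

Definition idem (p : A) : Prop := p * p = p.

Definition primitive_idem (p : A) : Prop :=
  [/\ idem p, p != 0 &
      forall q r : A, idem q -> idem r -> q * r = 0 -> r * q = 0 -> p = q + r ->
        q = 0 \/ r = 0].

Definition complete_prim_orth (n : nat) (e : 'I_n -> A) : Prop :=
  [/\ forall i j, e i * e j = (if i == j then e i else 0),
      \sum_(i < n) e i = 1 &
      forall i, primitive_idem (e i)].

(* A is basic: e_i A and e_j A are non-isomorphic (as right A-modules) for  *)
(* i <> j; an isomorphism e_j A -> e_i A is left multiplication by some     *)
(* x in e_i A e_j with inverse given by some y in e_j A e_i. *)
Definition basic_alg (n : nat) (e : 'I_n -> A) : Prop :=
  forall i j : 'I_n,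
    (exists x y : A, [/\ x = e i * x * e j, y = e j * y * e i,
                         x * y = e i & y * x = e j]) -> i = j.

Definition connected_alg : Prop :=
  forall c : A, idem c -> (forall y : A, c * y = y * c) -> c = 0 \/ c = 1.

Definition in_rad (x : A) : Prop := forall y : A, (1 - y * x) \is a GRing.unit.

Definition adm_basis (n : nat) (e : 'I_n -> A) (B : seq A) : Prop :=
  [/\ basis_of fullv B,
      (forall i, e i \in B),
      (forall b, b \in B -> exists i j : 'I_n, b = e j * b * e i) &
      forall b, b \in B -> (forall i, b != e i) -> in_rad b].

Definition klinear (d : A -> A) : Prop :=
  forall (c : k) (x y : A), d (c *: x + y) = c *: d x + d y.

Definition der0 (n : nat) (e : 'I_n -> A) (d : A -> A) : Prop :=
  [/\ klinear d, forall x y : A, d (x * y) = d x * y + x * d y &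
      forall i, d (e i) = 0].

Definition diagonal (d : A -> A) (B : seq A) : Prop :=
  forall b, b \in B -> exists c : k, d b = c *: b.

Definition inner0_diff (n : nat) (e : 'I_n -> A) (D d : A -> A) : Prop :=
  exists c : 'I_n -> k, forall x : A,
    D x - d x = (\sum_(i < n) c i *: e i) * x - x * (\sum_(i < n) c i *: e i).

Section Presentation.
Variables (n : nat) (Q1 : finType) (src tgt : Q1 -> 'I_n).
(* The algebra map nu : kQ -> A is determined by nu(e_i) = e i and the      *)
(* images a alpha of the arrows. *)
Variables (e : 'I_n -> A) (a : Q1 -> A).

Definition nu_path (u : qpath n Q1) : A :=
  foldl (fun acc al => a al * acc) (e u.1) u.2.

(* Elements of kQ are represented by finite lists of (coefficient, path). *)
Definition nu_comb (l : seq (k * qpath n Q1)) : A :=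
  \sum_(p <- l) p.1 *: nu_path p.2.

Definition valid_comb (l : seq (k * qpath n Q1)) : bool :=
  all (fun p => pvalid src tgt p.2) l.

(* nu : kQ ->> A is a presentation: a well-defined algebra map (arrows go to *)
(* e_y A e_x), surjective, with admissible kernel. *)
Definition presentation : Prop :=
  [/\ forall al, a al = e (tgt al) * a al * e (src al),
      (forall y : A, exists l, valid_comb l /\ y = nu_comb l) &
      (exists N : nat, (2 <= N)%N /\
        (* (kQ^+)^N is contained in Ker nu *)
        (forall u, pvalid src tgt u -> (N <= size u.2)%N -> nu_path u = 0) /\
        (* Ker nu is contained in (kQ^+)^2 *)
        (forall l, uniq [seq p.2 | p <- l] -> valid_comb l -> nu_comb l = 0 ->
           forall p, p \in l -> (size p.2.2 <= 1)%N -> p.1 = 0))].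

Definition adapted (B : seq A) : Prop := forall al, a al \in B.

Definition minimal_relation (l : seq (k * qpath n Q1)) : Prop :=
  [/\ l != [::], uniq [seq p.2 | p <- l], valid_comb l,
      (forall p, p \in l -> p.1 != 0) /\ nu_comb l = 0 &
      (forall m : bitseq, mask m l != [::] -> (size (mask m l) < size l)%N ->
        nu_comb (mask m l) != 0)].

Inductive htp : walk n Q1 -> walk n Q1 -> Prop :=
| htp_refl w : htp w w
| htp_sym w1 w2 : htp w1 w2 -> htp w2 w1
| htp_trans w1 w2 w3 : htp w1 w2 -> htp w2 w3 -> htp w1 w3
| htp_ctx (u v w1 w2 : walk n Q1) :
    wvalid src tgt u -> wvalid src tgt v -> wvalid src tgt w1 -> wvalid src tgt w2 ->
    wend src tgt v = w1.1 -> wend src tgt v = w2.1 ->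
    wend src tgt w1 = u.1 -> wend src tgt w2 = u.1 ->
    htp w1 w2 -> htp (wcat u (wcat w1 v)) (wcat u (wcat w2 v))
| htp_inv1 (al : Q1) :
    htp (tgt al, [:: (al, false); (al, true)]) (tgt al, [::])
| htp_inv2 (al : Q1) :
    htp (src al, [:: (al, true); (al, false)]) (src al, [::])
| htp_rel (l : seq (k * qpath n Q1)) p q :
    minimal_relation l -> p \in l -> q \in l ->
    htp (path_walk p.2) (path_walk q.2).

(* g : walks -> k induces a group homomorphism pi_1(Q, I) -> k^+ *)
(* (pi_1 = homotopy classes of closed walks at x0). *)
Definition pi1_hom (x0 : 'I_n) (g : walk n Q1 -> k) : Prop :=
  (forall w1 w2, closed_at src tgt x0 w1 -> closed_at src tgt x0 w2 ->
     htp w1 w2 -> g w1 = g w2) /\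
  (forall w1 w2, closed_at src tgt x0 w1 -> closed_at src tgt x0 w2 ->
     g (wcat w2 w1) = g w2 + g w1).

Definition in_image_theta (x0 : 'I_n) (gamma : 'I_n -> walk n Q1) (d : A -> A) : Prop :=
  exists g : walk n Q1 -> k, pi1_hom x0 g /\
  exists D : A -> A,
    [/\ der0 e D,
        forall u : qpath n Q1, pvalid src tgt u ->
          D (nu_path u) =
            g (wcat (winv src tgt (gamma (pend src tgt u)))
                    (wcat (path_walk u) (gamma u.1))) *: nu_path u &
        inner0_diff e D d].

End Presentation.
End Algebra.

From HB Require Import structures.
From mathcomp Require Import all_boot all_order all_algebra falgebra ring.
Import GRing.Theory.
Set Implicit Arguments.
Unset Strict Implicit.
Unset Printing Implicit Defensive.
Local Open Scope ring_scope.

(* d is diagonal on B and sends every arrow into B, so it multiplies the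
   image of each arrow al by a scalar cf al, and by the Leibniz rule the image
   of a path by the sum of the cf over its arrows.  Extending this weight to
   walks, with weight -cf al on al^-1, gives an additive function on walks
   killing al al^-1 and al^-1 al.  A minimal relation is a vanishing sum of
   eigenvectors of d; applying products of the maps d - mu separates the
   eigenvalues, so the paths of a single weight already form a relation, and
   minimality forces all its paths to have the same weight.  Thus the weight
   is a homomorphism g : pi_1(Q, I) -> k^+, and adding to d the inner
   derivation of sum_i -g(gamma_i) e_i gives the derivation
   nu(u) |-> g(gamma_y^-1 u gamma_x) nu(u). *)

Lemma eigen_sum_eq0 (k : fieldType) (V : lmodType k) (f : {linear V -> V})
    (I : eqType) (r : seq I) (v : I -> V) (lam : I -> k) :
    (forall i, f (v i) = lam i *: v i) -> \sum_(i <- r) v i = 0 ->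
  forall mu, \sum_(i <- r | lam i == mu) v i = 0.
Proof.
move=> f_v sum_v0 mu.
have annihilated (M : seq k) : \sum_(i <- r) (\prod_(m <- M) (lam i - m)) *: v i = 0.
  elim: M => [|m M IH]; first by under eq_bigr do rewrite big_nil scale1r.
  set X := \sum_(i <- r) _ in IH.
  transitivity (f X - m *: X); last by rewrite IH linear0 scaler0 subr0.
  rewrite linear_sum scaler_sumr -sumrB; apply: eq_bigr => i _.
  by rewrite linearZ /= f_v big_cons !scalerA -scalerBl mulrBl mulrC.
pose M := [seq lam i | i <- r & lam i != mu].
have M_nz : \prod_(m <- M) (mu - m) != 0.
  rewrite prodf_seq_neq0; apply/allP => _ /mapP [i + ->].
  by rewrite mem_filter subr_eq0 eq_sym => /andP [].
have split_eigen : \sum_(i <- r) (\prod_(m <- M) (lam i - m)) *: v i =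
    (\prod_(m <- M) (mu - m)) *: \sum_(i <- r | lam i == mu) v i.
  rewrite scaler_sumr [RHS]big_mkcond /=; apply: eq_big_seq => i ri.
  case: eqP => [-> //|/eqP lam_mu].
  apply/eqP; rewrite scaler_eq0 prodf_seq_eq0; apply/orP; left; apply/hasP.
  exists (lam i); last by rewrite /= subrr.
  by apply: map_f; rewrite mem_filter lam_mu.
by have /eqP := annihilated M; rewrite split_eigen scaler_eq0 (negbTE M_nz) => /eqP.
Qed.

Section WalkWeight.
Variables (k : fieldType) (n : nat) (Q1 : finType) (cf : Q1 -> k).

Definition letter_weight (l : letter Q1) : k := if l.2 then cf l.1 else - cf l.1.

Definition walk_weight (w : walk n Q1) : k := \sum_(l <- w.2) letter_weight l.

Lemma walk_weight_cat (w2 w1 : walk n Q1) :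
  walk_weight (wcat w2 w1) = walk_weight w2 + walk_weight w1.
Proof. by rewrite /walk_weight big_cat addrC. Qed.

Lemma walk_weight_inv (src tgt : Q1 -> 'I_n) (w : walk n Q1) :
  walk_weight (winv src tgt w) = - walk_weight w.
Proof.
rewrite /walk_weight big_rev big_map -sumrN; apply: eq_bigr => -[al []] _ //=.
by rewrite /letter_weight opprK.
Qed.

Lemma walk_weight_path (u : qpath n Q1) :
  walk_weight (path_walk u) = \sum_(al <- u.2) cf al.
Proof. by rewrite /walk_weight big_map. Qed.

End WalkWeight.

Section Derivations.
Variables (k : fieldType) (A : falgType k) (n : nat) (e : 'I_n -> A).

Lemma der0D (d1 d2 : A -> A) :
  der0 e d1 -> der0 e d2 -> der0 e (fun x => d1 x + d2 x).
Proof.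
case=> [lin1 leib1 e1] [lin2 leib2 e2]; split=> [c x y|x y|i].
- by rewrite lin1 lin2 scalerDr addrACA.
- by rewrite leib1 leib2 mulrDl mulrDr addrACA.
- by rewrite e1 e2 addr0.
Qed.

Lemma der0_inner (s : A) :
  (forall i, s * e i = e i * s) -> der0 e (fun x => s * x - x * s).
Proof.
move=> s_e; split=> [c x y|x y|i].
- by rewrite mulrDr mulrDl -scalerAr -scalerAl scalerBr opprD addrACA addrA.
- by rewrite mulrBl mulrBr !mulrA addrA subrK.
- by rewrite s_e subrr.
Qed.

Definition idem_comb (c : 'I_n -> k) : A := \sum_(i < n) c i *: e i.

Lemma idem_comb_mul (c : 'I_n -> k) (x : A) i :
  (forall j, e j * x = if j == i then x else 0) -> idem_comb c * x = c i *: x.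
Proof.
move=> e_x; rewrite mulr_suml (bigD1 i) //= -scalerAl e_x eqxx big1 ?addr0 // => j.
by move=> /negbTE ji; rewrite -scalerAl e_x ji scaler0.
Qed.

Lemma mul_idem_comb (c : 'I_n -> k) (x : A) i :
  (forall j, x * e j = if j == i then x else 0) -> x * idem_comb c = c i *: x.
Proof.
move=> x_e; rewrite mulr_sumr (bigD1 i) //= -scalerAr x_e eqxx big1 ?addr0 // => j.
by move=> /negbTE ji; rewrite -scalerAr x_e ji scaler0.
Qed.

End Derivations.

Section Presentation.
Variables (k : fieldType) (A : falgType k) (n : nat) (Q1 : finType).
Variables (src tgt : Q1 -> 'I_n) (e : 'I_n -> A) (a : Q1 -> A).

Lemma foldl_nu_mulr (l : seq Q1) (z w : A) :
  foldl (fun acc al => a al * acc) (z * w) l = foldl (fun acc al => a al * acc) z l * w.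
Proof. by elim: l z => //= al l IH z; rewrite mulrA IH. Qed.

Hypothesis e_orth : forall i j, e i * e j = if i == j then e i else 0.
Hypothesis a_corner : forall al, a al = e (tgt al) * a al * e (src al).

Lemma nu_path_mul_idem (u : qpath n Q1) i :
  nu_path e a u * e i = if i == u.1 then nu_path e a u else 0.
Proof.
rewrite /nu_path -foldl_nu_mulr e_orth eq_sym; case: eqP => // _.
by elim: u.2 => //= al l; rewrite mulr0.
Qed.

Lemma idem_mul_nu_path (u : qpath n Q1) i :
  e i * nu_path e a u = if i == pend src tgt u then nu_path e a u else 0.
Proof.
case: u => x l; rewrite /nu_path /pend /wend /=.
elim/last_ind: l => [|l al _] /=; first by rewrite e_orth; case: eqP => [->|].
rewrite foldl_rcons -map_comp map_rcons last_rcons /= mulrA a_corner !mulrA e_orth.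
by case: eqP => [->|_]; rewrite ?mul0r.
Qed.

Lemma idem_comb_mul_nu_path (c : 'I_n -> k) (u : qpath n Q1) :
  idem_comb e c * nu_path e a u = c (pend src tgt u) *: nu_path e a u.
Proof. exact/idem_comb_mul/idem_mul_nu_path. Qed.

Lemma nu_path_mul_idem_comb (c : 'I_n -> k) (u : qpath n Q1) :
  nu_path e a u * idem_comb e c = c u.1 *: nu_path e a u.
Proof. exact/mul_idem_comb/nu_path_mul_idem. Qed.

Variables (d : A -> A) (cf : Q1 -> k).
Hypotheses (d_der : der0 e d) (d_arrow : forall al, d (a al) = cf al *: a al).

Lemma der0_nu_path (u : qpath n Q1) :
  d (nu_path e a u) = walk_weight cf (path_walk u) *: nu_path e a u.
Proof.
case: d_der => _ d_leib d_e; rewrite walk_weight_path /nu_path.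
suff eigen_foldl (l : seq Q1) (z : A) (w : k) : d z = w *: z ->
    d (foldl (fun acc al => a al * acc) z l) =
    (w + \sum_(al <- l) cf al) *: foldl (fun acc al => a al * acc) z l.
  by rewrite -[\sum_(_ <- _) _]add0r; apply: eigen_foldl; rewrite d_e scale0r.
elim: l z w => [|al l IH] z w d_z /=; first by rewrite big_nil addr0.
rewrite big_cons addrA (IH _ (w + cf al)) // d_leib d_arrow d_z.
by rewrite -scalerAl -scalerAr -scalerDl addrC.
Qed.

Lemma minimal_relation_homogeneous (l : seq (k * qpath n Q1)) p q :
  minimal_relation src tgt e a l -> p \in l -> q \in l ->
  walk_weight cf (path_walk p.2) = walk_weight cf (path_walk q.2).
Proof.
case=> _ _ _ [_ l_rel] l_min pl ql.
pose wt (r : k * qpath n Q1) := walk_weight cf (path_walk r.2).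
pose P r := wt r == wt p.
have [d_lin _ _] := d_der.
pose dL : {linear A -> A} := HB.pack d (GRing.isLinear.Build k A A *:%R d d_lin).
have homog : nu_comb e a [seq r <- l | P r] = 0.
  rewrite /nu_comb big_filter.
  apply: (eigen_sum_eq0 (f := dL) (v := fun r => r.1 *: nu_path e a r.2)) => // r.
  by rewrite linearZ /= der0_nu_path scalerA mulrC -scalerA.
have homog_nil : [seq r <- l | P r] != [::].
  by apply/eqP => nil; have := mem_filter P p l; rewrite nil pl /P eqxx.
have : ~~ (size [seq r <- l | P r] < size l)%N.
  apply/negP => lt; have := l_min [seq P r | r <- l].
  by rewrite -filter_mask homog eqxx => /(_ homog_nil lt).
rewrite size_filter -leqNgt => count_ge.
have /allP/(_ q ql)/eqP wt_q : all P l by rewrite all_count eqn_leq count_size count_ge.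
exact: esym wt_q.
Qed.

Lemma htp_walk_weight (w1 w2 : walk n Q1) :
  htp src tgt e a w1 w2 -> walk_weight cf w1 = walk_weight cf w2.
Proof.
elim=> {w1 w2} [//|_ _ _ -> //|_ _ _ _ -> _ -> //| | al | al |].
- by move=> u v w1 w2 _ _ _ _ _ _ _ _ _ IH; rewrite !walk_weight_cat IH.
- by rewrite /walk_weight /= !big_cons big_nil /letter_weight /= addr0 addNr.
- by rewrite /walk_weight /= !big_cons big_nil /letter_weight /= addr0 subrr.
- by move=> l p q; exact: minimal_relation_homogeneous.
Qed.

End Presentation.

Theorem lemma2p5 (k : closedFieldType) (A : falgType k) (n : nat)
  (Q1 : finType) (src tgt : Q1 -> 'I_n) (e : 'I_n -> A) (a : Q1 -> A)
  (B : seq A) (d : A -> A) :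
  complete_prim_orth e -> basic_alg e -> connected_alg A ->
  no_oriented_cycles src tgt ->
  presentation src tgt e a ->
  adm_basis e B -> adapted a B ->
  der0 e d -> diagonal d B ->
  forall (x0 : 'I_n) (T : {set Q1}) (gamma : 'I_n -> walk n Q1),
    maximal_tree src tgt T -> gamma_spec src tgt T x0 gamma ->
    in_image_theta src tgt e a x0 gamma d.
Proof.
move=> [e_orth _ _] _ _ _ [a_corner _ _] _ a_B d_der d_diag x0 T gamma _ _.
have [cf d_arrow] : exists cf : Q1 -> k, forall al, d (a al) = cf al *: a al.
  by apply: (fin_all_exists (P := fun al c => d (a al) = c *: a al)) => al; exact: d_diag.
exists (walk_weight cf); split.
  split=> [w1 w2 _ _|w1 w2 _ _]; last exact: walk_weight_cat.
  exact: (htp_walk_weight d_der d_arrow).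
pose c i := - walk_weight cf (gamma i).
pose s := idem_comb e c.
have s_e i : s * e i = e i * s.
  have -> : e i = nu_path e a (i, [::]) by [].
  by rewrite (idem_comb_mul_nu_path e_orth a_corner) (nu_path_mul_idem_comb a e_orth).
exists (fun x => d x + (s * x - x * s)); split.
- exact/der0D/der0_inner.
- move=> u _; rewrite (der0_nu_path d_der d_arrow) (idem_comb_mul_nu_path e_orth a_corner).
  rewrite (nu_path_mul_idem_comb a e_orth) -scalerBl -scalerDl !walk_weight_cat walk_weight_inv.
  by congr (_ *: _); rewrite /c; ring.
- by exists c => x; rewrite addrAC subrr add0r.
Qed.
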